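(* Let $p>2$, $M>1$, $s_0>M$, $\ell\in\left(p,\min\left\{\frac{(p-1)^2+p-2}{p-2},p^*\right\}\right)$, and for $q\ge p+1$ let $\mathcal N_q$ be as in the context. There exists $\sigma>0$ such that $$\inf_{q\ge p+1}\ \inf_{u\in\mathcal N_q}\|u\|_{L^\infty(B)}\ge\sigma.$$
   Context: $B$ is the open unit ball of $\mathbb R^N$; $p^*=Np/(N-p)$ if $p<N$, $+\infty$ otherwise. $\mathcal C:=\{u\in W^{1,p}_{\mathrm{rad}}(B): u\ge0,\ u(r)\le u(s)\ \text{for }0<r\le s\le1\}$ (radial functions as functions of $r=|x|$). For $q\ge p+1$: $\tilde f_q(s)=s^{q-1}$ on $[0,s_0]$, $\tilde f_q(s)=s_0^{q-1}+\frac{q-1}{\ell-1}s_0^{q-\ell}(s^{\ell-1}-s_0^{\ell-1})$ for $s>s_0$, $\tilde f_q=0$ on $(-\infty,0)$; $\mathcal N_q:=\{u\in\mathcal C\setminus\{0\}: \int_B(|\nabla u|^p+|u|^p)dx=\int_B\tilde f_q(u)u\,dx\}$. *)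

From HB Require Import structures.
From mathcomp Require Import all_boot all_order all_algebra.
From mathcomp Require Import all_classical all_reals all_analysis.
Set Implicit Arguments. Unset Strict Implicit. Unset Printing Implicit Defensive.
Import Order.TTheory GRing.Theory Num.Theory.
Import numFieldNormedType.Exports.
Local Open Scope classical_set_scope.
Local Open Scope ring_scope.

Section Defs.
Variable R : realType.
Local Notation leb := (@lebesgue_measure R).

Definition pstar (N : nat) (p : R) : \bar R :=
  if p < N%:R then ((N%:R * p) / (N%:R - p))%:E else +oo%E.

Definition ftilde (s0 l q : R) (s : R) : R :=
  if s < 0 then 0
  else if s <= s0 then s `^ (q - 1)
  else s0 `^ (q - 1) + (q - 1) / (l - 1) * s0 `^ (q - l)
                        * (s `^ (l - 1) - s0 `^ (l - 1)).

(* Radial functions are represented as functions of r = |x| on ]0,1].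
   g is the (radial) weak derivative u' of u: u is locally absolutely
   continuous on ]0,1] with u(r) = u(1) - \int_r^1 g. *)
Definition radial_deriv (u g : R -> R) : Prop :=
  measurable_fun `](0:R), 1]%classic g /\
  forall r : R, 0 < r <= 1 ->
    leb.-integrable `[r, (1:R)]%classic (EFin \o g) /\
    u r = u 1 - fine (\int[leb]_(t in `[r, (1:R)]%classic) (g t)%:E).

(* weighted radial integral: \int_B F(|x|) dx = |S^{N-1}| \int_0^1 F(r) r^{N-1} dr *)
Definition radint (N : nat) (F : R -> R) : \bar R :=
  \int[leb]_(r in `](0:R), 1]%classic) (F r * r ^+ N.-1)%:E.

Definition W1p_rad_with (N : nat) (p : R) (u g : R -> R) : Prop :=
  radial_deriv u g /\
  measurable_fun `](0:R), 1]%classic u /\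
  (radint N (fun r => (`|g r| `^ p)%R) < +oo)%E /\
  (radint N (fun r => (`|u r| `^ p)%R) < +oo)%E.

Definition cone_C (N : nat) (p : R) (u : R -> R) : Prop :=
  (exists g, W1p_rad_with N p u g) /\
  (forall r, 0 < r <= 1 -> 0 <= u r) /\
  (forall r s, 0 < r -> r <= s -> s <= 1 -> u r <= u s).

Definition nonzero_rad (u : R -> R) : Prop := exists r, 0 < r <= 1 /\ u r != 0.

Definition nehari (N : nat) (p s0 l q : R) (u : R -> R) : Prop :=
  cone_C N p u /\ nonzero_rad u /\
  exists g, W1p_rad_with N p u g /\
    radint N (fun r => `|g r| `^ p + `|u r| `^ p)
    = radint N (fun r => ftilde s0 l q (u r) * u r).

(* ||u||_{L^infty(B)}, computed on the continuous representative on ]0,1] *)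
Definition linf_norm (u : R -> R) : \bar R :=
  ereal_sup [set (`|u r|)%:E | r in `](0:R), 1]%classic].
End Defs.

From HB Require Import structures.
From mathcomp Require Import all_boot all_order all_algebra.
From mathcomp Require Import all_classical all_reals all_analysis.
From mathcomp Require Import measurable_realfun lra.
Import Order.TTheory GRing.Theory Num.Theory.
Import numFieldNormedType.Exports.
Set Implicit Arguments. Unset Strict Implicit. Unset Printing Implicit Defensive.
Local Open Scope classical_set_scope.
Local Open Scope ring_scope.

(* Take sigma = 1.  For 0 <= s <= 1 < s0 we have f_q(s) s = s^q <= s^p * s,
   so if ||u||_oo = u(1) < 1 the Nehari identity gives
   \int |u|^p <= \int |u'|^p + |u|^p = \int f_q(u) u <= u(1) \int |u|^p,
   forcing \int |u|^p = 0.  This is impossible: the radial representative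
   of u is continuous at 1, so a nonzero nondecreasing u is bounded below by
   a positive constant on some interval [r, 1]. *)

Lemma ge0_le_integral_subset d (T : measurableType d) (R : realType)
    (mu : {measure set T -> \bar R}) (A D : set T) (f g : T -> \bar R) :
  (forall x, A x -> (0 <= f x)%E) -> (forall x, D x -> (0 <= g x)%E) ->
  (forall x, A x -> D x /\ (f x <= g x)%E) ->
  (\int[mu]_(x in A) f x <= \int[mu]_(x in D) g x)%E.
Proof.
move=> f0 g0 fg; rewrite !ge0_integralE //.
apply: ereal_sup_le => _ [h /= hf <-]; exists h => //= x.
apply: le_trans (hf x) _; rewrite /patch; case: ifPn => [|_].
  by rewrite inE => /fg [Dx fgx]; rewrite ifT ?inE.
by case: ifPn => //; rewrite inE => /g0.
Qed.

Lemma ftilde_mul_le (R : realType) (s0 l p q a x : R) :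
  p + 1 <= q -> 0 <= x <= a -> x <= 1 -> x <= s0 ->
  ftilde s0 l q x * x <= a * x `^ p.
Proof.
move=> qp /andP[x0 xa] x1 xs0; rewrite /ftilde ltNge x0 /= xs0 [a * _]mulrC.
have [x_eq0|xn0] := eqVneq x 0.
  by rewrite x_eq0 mulr0 mulr_ge0 ?powR_ge0 // -x_eq0.
apply: ler_pM => //; first exact: powR_ge0.
apply: ger_powR; last by rewrite lerBrDr.
by rewrite x1 andbT lt_neqAle eq_sym xn0.
Qed.

Section radial.
Context {R : realType} {N : nat}.
Local Notation leb := (@lebesgue_measure R).
Local Notation D := (`](0:R), 1]%classic).

Lemma radial_deriv_cvg1 (u g : R -> R) (e : R) : radial_deriv u g -> 0 < e ->
  exists r, 0 < r < 1 /\ `|u 1 - u r| < e.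
Proof.
move=> [_ urep] e0.
(* u 1 - u r is an integral of g over [r, 1], which is small by absolute
   continuity of the integral of g on [1/2, 1]. *)
have [ig _] := urep (1/2) ltac:(apply/andP; split; lra).
pose f := g \_ `[1/2, (1:R)].
have intf : leb.-integrable setT (EFin \o f).
  by rewrite -restrict_EFin; apply/integrable_restrict => //=; rewrite setTI.
have [d [d0 hd]] := integral_normr_continuous intf e0.
pose r := Num.max (1/2) (1 - d/2).
have r2 : 1/2 <= r by rewrite le_max lexx.
have rd : 1 - d/2 <= r by rewrite le_max lexx orbT.
have r1 : r < 1 by rewrite gt_max; apply/andP; split; lra.
clearbody r.
have [igr ur] := urep r ltac:(apply/andP; split; lra).
exists r; split; first by apply/andP; split; lra.
rewrite ur opprB addrC subrK.
have sub_r : `[r, (1:R)] `<=` `[1/2, (1:R)] by apply: subset_itvr; rewrite bnd_simp.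
apply: le_lt_trans (le_normr_Rintegral _ igr) _; first exact: measurable_itv.
have -> : (\int[leb]_(t in `[r, (1:R)]) `|g t|)%R =
          (\int[leb]_(t in `[r, (1:R)]) `|f t|)%R.
  by apply: eq_Rintegral => z; rewrite inE => zr; rewrite /f patchE ifT // inE; apply: sub_r.
apply: hd; first exact: measurable_itv.
have := lebesgue_measure_itv (Interval (BLeft r) (BRight (1:R))).
by rewrite /= lte_fin r1 -EFinD => ->; rewrite lte_fin; lra.
Qed.

Lemma le_radint (F G : R -> R) : (forall r, 0 < r <= 1 -> 0 <= F r <= G r) ->
  (radint N F <= radint N G)%E.
Proof.
move=> FG; have rN (r : R) : 0 < r -> 0 <= r ^+ N.-1 by move=> r0; rewrite exprn_ge0 ?ltW.
apply: ge0_le_integral_subset => [r|r|r] /=; rewrite in_itv /= => r01.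
- by have /andP[F0 _] := FG r r01; rewrite lee_fin mulr_ge0 ?rN //; case/andP: r01.
- have /andP[F0 FG'] := FG r r01.
  by rewrite lee_fin mulr_ge0 ?rN ?(le_trans F0) //; case/andP: r01.
- split => //; have /andP[_ FG'] := FG r r01.
  by rewrite lee_fin ler_wpM2r ?rN //; case/andP: r01.
Qed.

Lemma radintZl (a : R) (F : R -> R) : 0 <= a -> measurable_fun D F ->
  (forall r, 0 < r <= 1 -> 0 <= F r) ->
  radint N (fun r => a * F r) = (a%:E * radint N F)%E.
Proof.
move=> a0 mF F0; rewrite /radint -ge0_integralZl_EFin //.
- by apply: eq_integral => r _; rewrite -EFinM mulrA.
- move=> r /=; rewrite in_itv /= => r01; have /andP[r0 _] := r01.
  by rewrite lee_fin; apply: mulr_ge0; [exact: F0 | exact/exprn_ge0/ltW].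
- by apply/measurable_EFinP; apply: measurable_funM => //; exact: exprn_measurable.
Qed.

Lemma radint_gt0 (F : R -> R) (r1 c : R) : 0 < r1 < 1 -> 0 < c ->
  (forall r, 0 < r <= 1 -> 0 <= F r) -> (forall r, r1 <= r <= 1 -> c <= F r) ->
  (0 < radint N F)%E.
Proof.
move=> /andP[r10 r11] c0 F0 Fc.
pose c' := c * r1 ^+ N.-1.
have c'0 : 0 < c' by rewrite mulr_gt0 ?exprn_gt0.
have int_c'_gt0 : (0 < \int[leb]_(x in `[r1, 1%R]%classic) (cst c'%:E) x)%E.
  rewrite integral_cst; last exact: measurable_itv.
  have := lebesgue_measure_itv (Interval (BLeft r1) (BRight (1:R))).
  by rewrite /= lte_fin r11 -EFinD => ->; rewrite -EFinM lte_fin mulr_gt0 ?subr_gt0.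
apply: lt_le_trans int_c'_gt0 _.
apply: ge0_le_integral_subset => [x _|x|x] /=; first by rewrite lee_fin ltW.
  rewrite in_itv /= => x01; have /andP[x0 _] := x01.
  by rewrite lee_fin; apply: mulr_ge0; [exact: F0 | exact/exprn_ge0/ltW].
rewrite in_itv /= => /andP[r1x x1]; have x0 : 0 < x by apply: lt_le_trans r1x.
split; first by rewrite in_itv /= x0.
rewrite lee_fin; apply: ler_pM.
- exact: ltW.
- by rewrite exprn_ge0 ?ltW.
- by apply: Fc; rewrite r1x x1.
- by apply: lerXn2r; rewrite ?nnegrE ?(ltW r10) ?(ltW x0).
Qed.

End radial.

Theorem lemma5p2 (R : realType) (N : nat) (p M s0 l : R) :
  (1 <= N)%N -> 2 < p -> 1 < M -> M < s0 ->
  p < l -> l < ((p - 1) ^+ 2 + p - 2) / (p - 2) -> (l%:E < pstar N p)%E ->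
  exists sigma : R, 0 < sigma /\
    forall (q : R) (u : R -> R), p + 1 <= q -> nehari N p s0 l q u ->
      (sigma%:E <= linf_norm u)%E.
Proof.
move=> _ p2 M1 Ms0 _ _ _; exists 1; split => // q u qp.
move=> [[_ [u_ge0 u_mono]] [[r0 [r0_01 ur0]] [g [[du [mu [_ Iu]]] nehari_id]]]].
have u1_le_norm : ((`|u 1|)%:E <= linf_norm u)%E.
  by apply: ereal_sup_ubound; exists 1 => //; rewrite /= in_itv /= ltr01 lexx.
have [u1_ge1|u1_lt1] := leP 1 (u 1).
  by apply: le_trans u1_le_norm; rewrite lee_fin (le_trans u1_ge1) ?ler_norm.
exfalso.
have u_bound r : 0 < r <= 1 -> 0 <= u r <= u 1.
  by move=> r01; rewrite u_ge0 //; case/andP: r01 => r0' r1'; apply: u_mono.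
have u1_gt0 : 0 < u 1.
  have /andP[ur0_ge0 ur0_le] := u_bound r0 r0_01.
  by apply: lt_le_trans ur0_le; rewrite lt_neqAle eq_sym ur0.
have [r1 [r1_01 ur1_near]] := radial_deriv_cvg1 du u1_gt0.
have ur1_gt0 : 0 < u r1 by move: ur1_near; rewrite ltr_norml; lra.
pose I := radint N (fun r => `|u r| `^ p).
have I_gt0 : (0 < I)%E.
  apply: (radint_gt0 r1_01 (powR_gt0 p ur1_gt0)) => [r _|r /andP[r1r r_le1]].
    exact: powR_ge0.
  have r0' : 0 < r by case/andP: r1_01 => r10 _; apply: lt_le_trans r1r.
  have /andP[ur_ge0 _] := u_bound r (andb_true_intro (conj r0' r_le1)).
  rewrite ger0_norm //; apply: ge0_ler_powR.
  - by rewrite ltW // (lt_trans _ p2).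
  - by rewrite nnegrE ltW.
  - by rewrite nnegrE.
  - by apply: u_mono; case/andP: r1_01.
have I_le : (I <= (u 1)%:E * I)%E.
  apply: (@le_trans _ _ (radint N (fun r => `|g r| `^ p + `|u r| `^ p))).
    by apply: le_radint => r _; rewrite powR_ge0 lerDr powR_ge0.
  rewrite nehari_id -radintZl ?(ltW u1_gt0) ?powR_ge0 //; last first.
    apply: (measurableT_comp (measurable_powR p)).
    exact: (measurableT_comp (@normr_measurable R _) mu).
  apply: le_radint => r r01; have /andP[ur_ge0 ur_le] := u_bound r r01.
  have ur_le1 : u r <= 1 by lra.
  have ur_le_s0 : u r <= s0 by lra.
  apply/andP; split.
    by rewrite mulr_ge0 // /ftilde ltNge ur_ge0 /= ur_le_s0 powR_ge0.
  by rewrite ger0_norm // ftilde_mul_le ?ur_ge0.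
have I_fin : I \is a fin_num by rewrite ge0_fin_numE ?(ltW I_gt0).
move: I_gt0 I_le; rewrite -(fineK I_fin) lte_fin -EFinM lee_fin; nra.
Qed.
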